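(* Let $p\ge 2$ and $m\ge 2$ be integers. There exist $W\in\mathbb{R}^{2\times p}$ and $V\in\mathbb{R}^{p\times 2}$ such that the width-$2$ sine network $s^\theta(x)=V\sin(Wx)$, $\theta=(W,V)$, satisfies \[ \mathbb{P}_{(X,Y)\sim\mathcal{D}_m}\big[h_\theta(X)=Y\big]=1 . \]
   Context: Let $[p]=\{0,1,\dots,p-1\}$ and let $e_r$ ($r\in[p]$) be the standard basis vectors of $\mathbb{R}^p$. For an integer $m\ge1$, let $\mathcal{X}_m=\{x\in\{0,1,\dots,m\}^p:\ \|x\|_1=m\}$. The distribution $\mathcal{D}_m$ on $\mathcal{X}_m\times[p]$ is that of $(X,Y)$ where $s_1,\dots,s_m$ are i.i.d. uniform on $[p]$, $X=\sum_{i=1}^m e_{s_i}$ and $Y=(\sum_{i=1}^m s_i)\bmod p$ (equivalently $Y=(\sum_{r\in[p]} rX_r)\bmod p$). The function $\sin$ is applied entrywise. For a score vector $s^\theta(x)\in\mathbb{R}^p$ with coordinates indexed by $[p]$, the predictor is $h_\theta(x)=\ell$ if $s^\theta_\ell(x)>s^\theta_k(x)$ for all $k\ne\ell$, and $h_\theta(x)=\bot$ (an invalid prediction, never equal to any label) otherwise. *)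

From HB Require Import structures.
From mathcomp Require Import all_boot all_order all_algebra.
From mathcomp Require Import all_classical all_reals.
From mathcomp Require Import trigo.
Set Implicit Arguments. Unset Strict Implicit. Unset Printing Implicit Defensive.
Import Order.TTheory GRing.Theory Num.Theory.
Local Open Scope ring_scope.

Section Defs.
Variables (R : realType) (p m : nat).

Definition sample := {ffun 'I_m -> 'I_p}.

(* X = sum_i e_{s_i}: coordinate r counts the i with s_i = r *)
Definition featX (s : sample) : 'cV[R]_p :=
  \col_(r < p) (#|[set i : 'I_m | s i == r]|)%:R.

Definition labelY (s : sample) : nat := ((\sum_(i < m) nat_of_ord (s i)) %% p)%N.

Definition score (W : 'M[R]_(2, p)) (V : 'M[R]_(p, 2)) (x : 'cV[R]_p) : 'cV[R]_p :=
  V *m map_mx (@sin R) (W *m x).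

Definition strict_argmax (sc : 'cV[R]_p) (l : 'I_p) : bool :=
  [forall k : 'I_p, (k != l) ==> (sc k 0 < sc l 0)].

(* predictor h_theta; None plays the role of the invalid prediction ⊥ *)
Definition h_theta (W : 'M[R]_(2, p)) (V : 'M[R]_(p, 2)) (x : 'cV[R]_p) : option 'I_p :=
  [pick l | strict_argmax (score W V x) l].

(* P_{(X,Y) ~ D_m}[h_theta(X) = Y], with s uniform on [p]^m *)
Definition accuracy (W : 'M[R]_(2, p)) (V : 'M[R]_(p, 2)) : R :=
  (#|[set s : sample | omap (@nat_of_ord p) (h_theta W V (featX s)) == Some (labelY s)]|)%:R
  / (#|{: sample}|)%:R.
End Defs.

(* Reading off the count vector x, the first row of W computes theta * S, with
   theta = 2 pi / p and S = s_1 + ... + s_m, and the second row computes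
   theta * S + pi / 2, because the coordinates of x add up to m.  The sine layer
   thus outputs (sin (theta S), cos (theta S)), and the row (sin (theta l),
   cos (theta l)) of V turns it into cos (theta (S - l)).  This is 1 exactly for
   l = S mod p and strictly smaller for every other l in [p], so the predictor
   returns the label on every sample. *)
From HB Require Import structures.
From mathcomp Require Import all_boot all_order all_algebra.
From mathcomp Require Import all_classical all_reals.
From mathcomp Require Import trigo.
From mathcomp Require Import zify lra.
Import Order.TTheory GRing.Theory Num.Theory.
Local Open Scope ring_scope.

Lemma cos_lt1 (R : realType) (x : R) : 0 < `|x| < pi *+ 2 -> cos x < 1.
Proof.
rewrite -cos_norm; move: `|x| => {}x /andP[x_gt0 x_lt2pi].
have -> : x = (x / 2) *+ 2 by rewrite -mulr_natr divfK // pnatr_eq0.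
have : 0 < sin (x / 2).
  by apply: sin_gt0_pi; rewrite divr_gt0 //= ltr_pdivrMr // mulr_natr.
rewrite cos_mulr2n cos2sin2 => sin_gt0.
have := exprn_gt0 2 sin_gt0; lra.
Qed.

Lemma strict_argmax_unique {R : realType} {p} {sc : 'cV[R]_p} {l l' : 'I_p} :
  strict_argmax sc l -> strict_argmax sc l' -> l = l'.
Proof.
move=> /forallP max_l /forallP max_l'; apply/eqP; apply: contraT => ne.
have lt_l'l : sc l' 0 < sc l 0 by apply: (implyP (max_l l')); rewrite eq_sym.
by have := lt_trans lt_l'l (implyP (max_l' l) ne); rewrite ltxx.
Qed.

Lemma h_theta_strict_argmax {R : realType} {p} {W : 'M[R]_(2, p)} {V x} {l : 'I_p} :
  strict_argmax (score W V x) l -> h_theta W V x = Some l.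
Proof.
move=> max_l; rewrite /h_theta; case: pickP => [l' max_l' | no_max].
  by rewrite (strict_argmax_unique max_l' max_l).
by have := no_max l; rewrite max_l.
Qed.

Lemma accuracy_eq1 {R : realType} {p} m (W : 'M[R]_(2, p)) V : (0 < p)%N ->
  (forall s : sample p m, omap (@nat_of_ord p) (h_theta W V (featX R s)) = Some (labelY s)) ->
  accuracy m W V = 1.
Proof.
move=> p_gt0 correct; rewrite /accuracy.
have -> : [set s | omap (@nat_of_ord p) (h_theta W V (featX R s)) == Some (labelY s)] =
          [set: sample p m].
  by apply/setP => s; rewrite !inE correct eqxx.
by rewrite cardsT divff // pnatr_eq0 -lt0n card_ffun !card_ord expn_gt0 p_gt0.
Qed.

Lemma sum_featX {R : realType} {p m} (s : sample p m) (f : 'I_p -> R) :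
  \sum_(r < p) f r * featX R s r 0 = \sum_(i < m) f (s i).
Proof.
rewrite (partition_big s predT) //=; apply: eq_bigr => r _.
rewrite mxE (eq_bigr (fun _ => f r)); last by move=> i /eqP->.
by rewrite sumr_const mulr_natr cardsE.
Qed.

Section SineNetwork.
Variables (R : realType) (p m : nat).
Hypotheses (p_gt0 : (0 < p)%N) (m_gt0 : (0 < m)%N).

Definition angle : R := pi *+ 2 / p%:R.

Definition sine_net_W : 'M[R]_(2, p) :=
  \matrix_(j, r) (angle * (r : nat)%:R + (j : nat)%:R * (pi / 2 / m%:R)).

Definition sine_net_V : 'M[R]_(p, 2) :=
  \matrix_(l, j) (if (j : nat) == 0%N then sin (angle * (l : nat)%:R)
                  else cos (angle * (l : nat)%:R)).

Lemma angle_gt0 : 0 < angle.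
Proof. by rewrite divr_gt0 ?ltr0n // mulrn_wgt0 // pi_gt0. Qed.

Lemma angle_mul_p : angle * p%:R = pi *+ 2.
Proof. by rewrite divfK // pnatr_eq0 -lt0n. Qed.

Lemma sine_net_W_featX (s : sample p m) (j : 'I_2) :
  (sine_net_W *m featX R s) j 0 =
  angle * (\sum_(i < m) nat_of_ord (s i))%:R + (j : nat)%:R * (pi / 2).
Proof.
rewrite mxE (eq_bigr (fun r : 'I_p =>
  (angle * (r : nat)%:R + (j : nat)%:R * (pi / 2 / m%:R)) * featX R s r 0));
  last by move=> r _; rewrite mxE.
rewrite sum_featX big_split /= sumr_const card_ord -mulr_sumr -natr_sum.
by congr (_ + _); rewrite -mulrnAr -[_ *+ m]mulr_natr divfK // pnatr_eq0 -lt0n.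
Qed.

Lemma score_sine_net (s : sample p m) (l : 'I_p) :
  score sine_net_W sine_net_V (featX R s) l 0 =
  cos (angle * (\sum_(i < m) nat_of_ord (s i))%:R - angle * (l : nat)%:R).
Proof.
rewrite /score mxE !big_ord_recl big_ord0 addr0 ![map_mx _ _ _ _]mxE.
rewrite !sine_net_W_featX !mxE /=.
by rewrite mul0r addr0 mul1r sinDpihalf cosB addrC mulrC [sin _ * _]mulrC.
Qed.

Lemma cos_angle_modn (n : nat) (x : R) :
  cos (angle * n%:R - x) = cos (angle * (n %% p)%:R - x).
Proof.
rewrite {1}(divn_eq n p) natrD natrM mulrDr mulrA [angle * _]mulrC -mulrA.
by rewrite angle_mul_p -addrA addrC mulr_natl periodicn //; apply: cosD2pi.
Qed.

Lemma cos_angle_sub_lt1 (a b : 'I_p) :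
  a != b -> cos (angle * (a : nat)%:R - angle * (b : nat)%:R) < 1.
Proof.
move=> ne; apply: cos_lt1.
rewrite -mulrBr normrM gtr0_norm ?angle_gt0 // -angle_mul_p.
rewrite pmulr_rgt0 ?angle_gt0 // ltr_pM2l ?angle_gt0 // normr_gt0 subr_eq0.
rewrite eqr_nat val_eqE ne /=.
have a_lt_p := ltn_ord a; have b_lt_p := ltn_ord b.
case: (leqP b a) => [le_ba | lt_ab]; first by rewrite -natrB // normr_nat ltr_nat; lia.
by rewrite -opprB normrN -natrB ?normr_nat ?ltr_nat; lia.
Qed.

Lemma strict_argmax_sine_net (s : sample p m) :
  strict_argmax (score sine_net_W sine_net_V (featX R s))
                (Ordinal (ltn_pmod (\sum_(i < m) nat_of_ord (s i)) p_gt0)).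
Proof.
apply/forallP => k; apply/implyP => ne.
rewrite !score_sine_net !(cos_angle_modn (\sum_(i < m) _)) subrr cos0.
by apply: (cos_angle_sub_lt1 (Ordinal (ltn_pmod _ p_gt0))); rewrite eq_sym.
Qed.

End SineNetwork.

Theorem mainTheorem1 (R : realType) (p m : nat) (hp : (2 <= p)%N) (hm : (2 <= m)%N) :
  exists (W : 'M[R]_(2, p)) (V : 'M[R]_(p, 2)), accuracy m W V = 1.
Proof.
have p_gt0 : (0 < p)%N by lia.
have m_gt0 : (0 < m)%N by lia.
exists (sine_net_W R p m), (sine_net_V R p).
apply: accuracy_eq1 => // s.
by rewrite (h_theta_strict_argmax (@strict_argmax_sine_net R p m p_gt0 m_gt0 s)).
Qed.
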